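(* In the setting of the blurring mean-shift iteration with $f$ PDD and fixed positive weights, let $C_1=\bigcap_{t\ge0}C_1^{(t)}$ where $C_1^{(t)}$ is the convex hull of $\{x_1^{(t)},\dots,x_N^{(t)}\}$. Suppose $i$ is an index such that $x_i^{(t)}\to v$ as $t\to\infty$ for some vertex $v$ of $C_1$. Then for every index $j$ such that $\lim_{t\to\infty}x_j^{(t)}\neq v$, we have $\lim_{t\to\infty}f(x_i^{(t)}-x_j^{(t)})=0$.
   Context: Setting: $x_1,\dots,x_N\in\mathbb{R}^p$, fixed weights $w_1,\dots,w_N>0$, and $f:\mathbb{R}^p\to[0,1]$ PDD, meaning: $f(u)=1$ iff $u=0$; $f(u)=\varphi(\|u\|)$ for some $\varphi:[0,\infty)\to[0,1]$; $\varphi$ is decreasing (non-increasing). The blurring mean-shift iteration is $x_i^{(0)}=x_i$ and $x_i^{(t+1)}=\frac{\sum_{j=1}^N f(x_i^{(t)}-x_j^{(t)})w_jx_j^{(t)}}{\sum_{j=1}^N f(x_i^{(t)}-x_j^{(t)})w_j}$. *)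

From Stdlib Require Import Reals Lra Lia.
Open Scope R_scope.

(* Points of R^p are represented as functions nat -> R, of which only the
   coordinates k < p are meaningful.  Two points are equal in R^p iff they
   agree on all coordinates k < p. *)
Definition vec := nat -> R.

Definition veq (p : nat) (u v : vec) : Prop :=
  forall k, (k < p)%nat -> u k = v k.

Definition vzero : vec := fun _ => 0.
Definition vadd (u v : vec) : vec := fun k => u k + v k.
Definition vsub (u v : vec) : vec := fun k => u k - v k.
Definition vscale (a : R) (u : vec) : vec := fun k => a * u k.

Fixpoint rsum (n : nat) (g : nat -> R) : R :=
  match n with
  | O => 0
  | S m => rsum m g + g m
  end.

Fixpoint vsum (n : nat) (g : nat -> vec) : vec :=
  match n with
  | O => vzero
  | S m => vadd (vsum m g) (g m)
  end.

Definition vnorm (p : nat) (u : vec) : R := sqrt (rsum p (fun k => u k * u k)).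

Definition PDD (p : nat) (f : vec -> R) : Prop :=
  (forall u, 0 <= f u <= 1) /\
  (forall u, f u = 1 <-> veq p u vzero) /\
  exists phi : R -> R,
    (forall u, f u = phi (vnorm p u)) /\
    (forall a b, 0 <= a -> a <= b -> phi b <= phi a).

(* Blurring mean-shift: bms p N f w x t i = x_i^{(t)} *)
Fixpoint bms (N : nat) (f : vec -> R) (w : nat -> R) (x : nat -> vec)
    (t : nat) : nat -> vec :=
  match t with
  | O => x
  | S t' =>
      let y := bms N f w x t' in
      fun i =>
        vscale (/ rsum N (fun j => f (vsub (y i) (y j)) * w j))
               (vsum N (fun j => vscale (f (vsub (y i) (y j)) * w j) (y j)))
  end.

Definition in_conv_hull (p N : nat) (z : nat -> vec) (y : vec) : Prop :=
  exists lam : nat -> R,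
    (forall j, (j < N)%nat -> 0 <= lam j) /\
    rsum N lam = 1 /\
    veq p y (vsum N (fun j => vscale (lam j) (z j))).

Definition bms_C1 (p N : nat) (f : vec -> R) (w : nat -> R) (x : nat -> vec)
    (y : vec) : Prop :=
  forall t, in_conv_hull p N (bms N f w x t) y.

Definition is_vertex (p : nat) (S : vec -> Prop) (v : vec) : Prop :=
  S v /\
  forall a b s, S a -> S b -> 0 < s < 1 ->
    veq p v (vadd (vscale s a) (vscale (1 - s) b)) ->
    veq p a v /\ veq p b v.

Definition vconv (p : nat) (u : nat -> vec) (v : vec) : Prop :=
  forall k, (k < p)%nat -> Un_cv (fun t => u t k) (v k).

From Stdlib Require Import Reals Lra Lia Rtopology ClassicalEpsilon Classical.
Open Scope R_scope.

(* Write D_T(s) for the set of nonnegative combinations of the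
   points x_1^(T), ..., x_N^(T) with total weight s, so that D_T(1) is the
   convex hull C_1^(T).
   (1) Every x_k^(t+1) lies in C_1^(t), hence D_t(s) is contained in D_T(s)
       whenever T <= t, and every D_T(s) is a closed set.
   (2) Consequently the limit v_j of x_j^(t) lies in C_1.
   (3) If f(x_i^(t) - x_j^(t)) does not tend to 0, it is >= eps for infinitely
       many t.  For those t the weight of x_j^(t) in the combination giving
       x_i^(t+1) is at least some c in (0,1) independent of t, so
       x_i^(t+1) - c x_j^(t) lies in D_t(1-c).  Passing to the limit along
       these t gives v - c v_j in D_T(1-c) for every T, i.e.
       b = (v - c v_j) / (1 - c) lies in C_1.
   (4) Then v = c v_j + (1 - c) b with v_j, b in C_1; since v is a vertex of
       C_1 this forces v_j = v, contradicting the hypothesis on j. *)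

Lemma vsum_coord n g m : vsum n g m = rsum n (fun j => g j m).
Proof.
  induction n as [|n IH]; simpl; [reflexivity|].
  unfold vadd. rewrite IH. reflexivity.
Qed.

Lemma rsum_ext n g h : (forall j, (j < n)%nat -> g j = h j) -> rsum n g = rsum n h.
Proof.
  induction n as [|n IH]; intros H; simpl; [reflexivity|].
  rewrite IH by (intros; apply H; lia). rewrite H by lia. reflexivity.
Qed.

Lemma rsum_plus n g h : rsum n (fun j => g j + h j) = rsum n g + rsum n h.
Proof. induction n as [|n IH]; simpl; [lra|rewrite IH; ring]. Qed.

Lemma rsum_scal n a g : rsum n (fun j => a * g j) = a * rsum n g.
Proof. induction n as [|n IH]; simpl; [ring|rewrite IH; ring]. Qed.

Lemma rsum_scalr n a g : rsum n (fun j => g j * a) = rsum n g * a.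
Proof. induction n as [|n IH]; simpl; [ring|rewrite IH; ring]. Qed.

Lemma rsum_swap n m g :
  rsum n (fun a => rsum m (fun b => g a b)) = rsum m (fun b => rsum n (fun a => g a b)).
Proof.
  induction n as [|n IH]; simpl.
  - induction m as [|m IHm]; simpl; [reflexivity|rewrite <- IHm; ring].
  - rewrite IH, <- rsum_plus. reflexivity.
Qed.

Lemma rsum_nonneg n g : (forall j, (j < n)%nat -> 0 <= g j) -> 0 <= rsum n g.
Proof.
  induction n as [|n IH]; intros H; simpl; [lra|].
  assert (0 <= rsum n g) by (apply IH; intros; apply H; lia).
  pose proof (H n ltac:(lia)). lra.
Qed.

Lemma rsum_le n g h : (forall j, (j < n)%nat -> g j <= h j) -> rsum n g <= rsum n h.
Proof.
  induction n as [|n IH]; intros H; simpl; [lra|].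
  assert (rsum n g <= rsum n h) by (apply IH; intros; apply H; lia).
  pose proof (H n ltac:(lia)). lra.
Qed.

Lemma rsum_ge_term n g j :
  (forall k, (k < n)%nat -> 0 <= g k) -> (j < n)%nat -> g j <= rsum n g.
Proof.
  induction n as [|n IH]; intros H Hj; simpl; [lia|].
  destruct (Nat.eq_dec j n) as [->|Hne].
  - assert (0 <= rsum n g) by (apply rsum_nonneg; intros; apply H; lia). lra.
  - assert (g j <= rsum n g) by (apply IH; [intros; apply H; lia|lia]).
    pose proof (H n ltac:(lia)). lra.
Qed.

Lemma rsum_upd n g j d : (j < n)%nat ->
  rsum n (fun k => if Nat.eqb k j then g k + d else g k) = rsum n g + d.
Proof.
  induction n as [|n IH]; intros Hj; simpl; [lia|].
  destruct (Nat.eq_dec j n) as [->|Hne].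
  - rewrite Nat.eqb_refl, (rsum_ext n _ g); [ring|].
    intros k Hk. destruct (Nat.eqb_spec k n); [lia|reflexivity].
  - rewrite IH by lia. destruct (Nat.eqb_spec n j); [lia|ring].
Qed.

Definition nncomb (p N : nat) (z : nat -> vec) (y : vec) (s : R) : Prop :=
  exists lam : nat -> R,
    (forall j, (j < N)%nat -> 0 <= lam j) /\ rsum N lam = s /\
    veq p y (vsum N (fun j => vscale (lam j) (z j))).

Lemma nncomb_weight_nonneg p N z y s : nncomb p N z y s -> 0 <= s.
Proof. intros [lam [H1 [H2 _]]]. rewrite <- H2. apply rsum_nonneg; auto. Qed.

Lemma nncomb_split p N z y s :
  nncomb p (S N) z y s <->
  exists mu, 0 <= mu /\ nncomb p N z (vsub y (vscale mu (z N))) (s - mu).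
Proof.
  split.
  - intros [lam [H1 [H2 H3]]]. exists (lam N). split; [apply H1; lia|].
    exists lam. split; [intros; apply H1; lia|]. split.
    + simpl in H2. lra.
    + intros m Hm. unfold vsub. rewrite H3 by lia. simpl. unfold vadd, vscale. ring.
  - intros [mu [Hmu [lam [H1 [H2 H3]]]]].
    exists (fun k => if Nat.eqb k N then mu else lam k). split; [|split].
    + intros k Hk. destruct (Nat.eqb_spec k N); [lra|apply H1; lia].
    + simpl. rewrite Nat.eqb_refl, (rsum_ext N _ lam); [lra|].
      intros k Hk. destruct (Nat.eqb_spec k N); [lia|reflexivity].
    + intros m Hm. pose proof (H3 m Hm) as Hy. unfold vsub, vscale in Hy.
      simpl. unfold vadd. rewrite Nat.eqb_refl. rewrite !vsum_coord in *.
      rewrite (rsum_ext N _ (fun j => vscale (lam j) (z j) m)).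
      * unfold vscale. lra.
      * intros k Hk. destruct (Nat.eqb_spec k N); [lia|reflexivity].
Qed.

Lemma nncomb_scale p N z y s a s' :
  0 <= a -> s' = a * s -> nncomb p N z y s -> nncomb p N z (vscale a y) s'.
Proof.
  intros Ha -> [lam [H1 [H2 H3]]]. exists (fun k => a * lam k). split; [|split].
  - intros k Hk. pose proof (H1 k Hk). nra.
  - rewrite rsum_scal, H2. reflexivity.
  - intros m Hm. unfold vscale at 1. rewrite H3 by lia. rewrite !vsum_coord.
    unfold vscale. rewrite <- rsum_scal. apply rsum_ext. intros; ring.
Qed.

Lemma nncomb_remove p N z y s lam j c :
  (forall k, (k < N)%nat -> 0 <= lam k) -> rsum N lam = s ->
  veq p y (vsum N (fun k => vscale (lam k) (z k))) -> (j < N)%nat -> c <= lam j ->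
  nncomb p N z (vsub y (vscale c (z j))) (s - c).
Proof.
  intros H1 H2 H3 Hj Hc.
  exists (fun k => if Nat.eqb k j then lam k + - c else lam k). split; [|split].
  - intros k Hk. destruct (Nat.eqb_spec k j); [subst; lra|auto].
  - rewrite rsum_upd by lia. lra.
  - intros m Hm. unfold vsub, vscale. rewrite H3 by lia. rewrite !vsum_coord. unfold vscale.
    rewrite (rsum_ext N (fun k => (if Nat.eqb k j then lam k + - c else lam k) * z k m)
      (fun k => if Nat.eqb k j
      then lam k * z k m + (- c * z j m) else lam k * z k m)).
    + rewrite rsum_upd by lia. ring.
    + intros k Hk. destruct (Nat.eqb_spec k j); [subst; ring|reflexivity].
Qed.

Lemma nncomb_trans p N M z z' y s :
  (forall k, (k < M)%nat -> nncomb p N z (z' k) 1) ->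
  nncomb p M z' y s -> nncomb p N z y s.
Proof.
  intros Hz [mu [H1 [H2 H3]]].
  destruct (choice (fun k (lam : nat -> R) => (k < M)%nat ->
      (forall j, (j < N)%nat -> 0 <= lam j) /\ rsum N lam = 1 /\
      veq p (z' k) (vsum N (fun j => vscale (lam j) (z j)))))
    as [L HL].
  { intros k. destruct (Compare_dec.lt_dec k M) as [Hk|Hk].
    - destruct (Hz k Hk) as [lam Hl]. exists lam. auto.
    - exists (fun _ => 0). intros; lia. }
  exists (fun j => rsum M (fun k => mu k * L k j)). split; [|split].
  - intros j Hj. apply rsum_nonneg. intros k Hk. destruct (HL k Hk) as [Hl _].
    pose proof (Hl j Hj). pose proof (H1 k Hk). nra.
  - rewrite rsum_swap, <- H2. apply rsum_ext. intros k Hk.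
    rewrite rsum_scal. destruct (HL k Hk) as [_ [-> _]]. ring.
  - intros m Hm. rewrite H3 by auto. rewrite !vsum_coord. unfold vscale.
    rewrite (rsum_ext M _ (fun k => rsum N (fun j => mu k * L k j * z j m))).
    + rewrite rsum_swap. apply rsum_ext. intros j Hj. rewrite <- rsum_scalr. reflexivity.
    + intros k Hk. destruct (HL k Hk) as [_ [_ Hv]]. rewrite Hv by auto.
      rewrite vsum_coord. unfold vscale. rewrite <- rsum_scal. apply rsum_ext. intros; ring.
Qed.

Definition close (p : nat) (y b : vec) (e : R) : Prop :=
  forall k, (k < p)%nat -> Rabs (y k - b k) < e.

Definition approx_nncomb (p N : nat) (z : nat -> vec) (b : vec) (sg : R) : Prop :=
  forall e, 0 < e -> exists y s,
    nncomb p N z y s /\ Rabs (s - sg) < e /\ close p y b e.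

Lemma small_is_zero a : (forall e, 0 < e -> Rabs a < e) -> a = 0.
Proof.
  intros H. destruct (Req_dec a 0) as [|Hn]; auto.
  pose proof (H (Rabs a) (Rabs_pos_lt a Hn)). lra.
Qed.

Definition accuracy (n : nat) : R := / (INR n + 1).

Lemma accuracy_bounds n : 0 < accuracy n <= 1.
Proof.
  unfold accuracy. pose proof (pos_INR n). split.
  - apply Rinv_0_lt_compat. lra.
  - rewrite <- Rinv_1. apply Rinv_le_contravar; lra.
Qed.

Lemma accuracy_small e : 0 < e -> exists N0, forall n, (N0 <= n)%nat -> accuracy n < e.
Proof.
  intros He. destruct (archimed_cor1 e He) as [N0 [H1 H2]]. exists N0. intros n Hn.
  apply Rle_lt_trans with (/ INR N0); auto. unfold accuracy.
  apply Rinv_le_contravar; [apply lt_0_INR; lia|]. apply le_INR in Hn. lra.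
Qed.

Lemma bounded_cluster_point (mu : nat -> R) (B : R) :
  (forall n, 0 <= mu n <= B) ->
  exists l, 0 <= l /\
    forall d N0, 0 < d -> exists n, (N0 <= n)%nat /\ Rabs (mu n - l) < d.
Proof.
  intros Hb. destruct (Bolzano_Weierstrass mu _ (compact_P3 0 B) Hb) as [l Hl].
  assert (Hnear : forall d N0, 0 < d -> exists n, (N0 <= n)%nat /\ Rabs (mu n - l) < d).
  { intros d N0 Hd. apply (Hl (disc l (mkposreal d Hd)) N0).
    exists (mkposreal d Hd). intros u Hu. exact Hu. }
  exists l. split; [|exact Hnear].
  destruct (Rle_dec 0 l) as [|Hneg]; [assumption|].
  destruct (Hnear (- l) 0%nat ltac:(lra)) as [n [_ Hn]].
  apply Rabs_def2 in Hn. pose proof (Hb n). lra.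
Qed.

Lemma coord_bound p (u : vec) : exists M, 1 <= M /\ forall k, (k < p)%nat -> Rabs (u k) <= M.
Proof.
  exists (1 + rsum p (fun k => Rabs (u k))). split.
  - pose proof (rsum_nonneg p (fun k => Rabs (u k)) (fun k _ => Rabs_pos _)). lra.
  - intros k Hk.
    pose proof (rsum_ge_term p (fun k => Rabs (u k)) k (fun k _ => Rabs_pos _) Hk). lra.
Qed.

(* The error estimate used for both the weight and the coordinates when the
   weight of the last generator is replaced by its cluster value. *)
Lemma dist_sub_scale a a' m l z d1 d2 :
  Rabs (a - a') < d1 -> Rabs (m - l) * Rabs z <= d2 ->
  Rabs ((a - m * z) - (a' - l * z)) < d1 + d2.
Proof.
  intros H1 H2.
  replace ((a - m * z) - (a' - l * z)) with ((a - a') + - ((m - l) * z)) by ring.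
  eapply Rle_lt_trans; [apply Rabs_triang|]. rewrite Rabs_Ropp, Rabs_mult. lra.
Qed.

(* Closedness, inductive step: the weight of the last generator along an
   approximating sequence has a cluster point l, and removing l * z_N leaves
   an approximable point for the remaining generators. *)
Lemma approx_nncomb_peel p N z b sg :
  approx_nncomb p (S N) z b sg ->
  exists l, 0 <= l /\ approx_nncomb p N z (vsub b (vscale l (z N))) (sg - l).
Proof.
  intros H.
  destruct (choice (fun n m => 0 <= m <= Rabs sg + 1 /\ exists y s,
      nncomb p N z (vsub y (vscale m (z N))) (s - m) /\
      Rabs (s - sg) < accuracy n /\ close p y b (accuracy n))) as [mu Hmu].
  { intros n. pose proof (accuracy_bounds n) as Hacc.
    destruct (H _ (proj1 Hacc)) as [y [s [Hys [Hs Hc]]]].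
    apply nncomb_split in Hys. destruct Hys as [m [Hm Hrest]].
    exists m. split; [|exists y, s; auto].
    apply nncomb_weight_nonneg in Hrest. apply Rabs_def2 in Hs.
    pose proof (Rle_abs sg). lra. }
  destruct (bounded_cluster_point mu (Rabs sg + 1) (fun n => proj1 (Hmu n)))
    as [l [Hl0 Hl]].
  exists l. split; [exact Hl0|]. intros e He.
  destruct (coord_bound p (z N)) as [M [HM1 HM]].
  destruct (accuracy_small (e / 2) ltac:(lra)) as [N0 HN0].
  assert (Hd : 0 < e / (2 * M)) by (apply Rdiv_lt_0_compat; lra).
  destruct (Hl _ N0 Hd) as [n [Hn Hmul]].
  destruct (Hmu n) as [_ [y [s [Hys [Hs Hc]]]]].
  pose proof (HN0 n Hn) as Hacc.
  assert (Hbound : forall r, 0 <= r <= M -> Rabs (mu n - l) * r <= e / 2).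
  { intros r Hr. replace (e / 2) with (e / (2 * M) * M) by (field; lra).
    apply Rmult_le_compat; try lra. apply Rabs_pos. }
  exists (vsub y (vscale (mu n) (z N))), (s - mu n). split; [exact Hys|split].
  - replace e with (e / 2 + e / 2) by field.
    replace (s - mu n - (sg - l)) with ((s - mu n * 1) - (sg - l * 1)) by ring.
    apply dist_sub_scale; [lra|]. rewrite Rabs_R1. apply Hbound. lra.
  - intros k Hk. unfold vsub, vscale. replace e with (e / 2 + e / 2) by field.
    apply dist_sub_scale; [pose proof (Hc k Hk); lra|].
    apply Hbound. pose proof (HM k Hk). pose proof (Rabs_pos (z N k)). lra.
Qed.

Lemma nncomb_closed p z N : forall b sg, approx_nncomb p N z b sg -> nncomb p N z b sg.
Proof.
  induction N as [|N IH]; intros b sg H.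
  - exists (fun _ => 0). split; [intros; lia|]. split.
    + simpl. symmetry. apply small_is_zero. intros e He.
      destruct (H e He) as [y [s [[lam [_ [Hs _]]] [Hs2 _]]]].
      simpl in Hs. subst s. rewrite Rminus_0_l, Rabs_Ropp in Hs2. exact Hs2.
    + intros k Hk. simpl. unfold vzero. apply small_is_zero. intros e He.
      destruct (H e He) as [y [s [[lam [_ [_ Hy]]] [_ Hc]]]].
      pose proof (Hc k Hk) as Hk'. rewrite Hy in Hk' by auto. simpl in Hk'.
      unfold vzero in Hk'. rewrite Rabs_minus_sym, Rminus_0_r in Hk'. exact Hk'.
  - destruct (approx_nncomb_peel p N z b sg H) as [l [Hl Hrest]].
    apply nncomb_split. exists l. split; [exact Hl|]. apply IH. exact Hrest.
Qed.

Lemma vconv_eventually_close p u b :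
  vconv p u b -> forall e, 0 < e -> exists T, forall t, (T <= t)%nat -> close p (u t) b e.
Proof.
  induction p as [|p IH]; intros H e He.
  - exists 0%nat. intros t _ k Hk. lia.
  - destruct (IH (fun k Hk => H k ltac:(lia)) e He) as [T1 H1].
    destruct (H p ltac:(lia) e He) as [T2 H2].
    exists (Nat.max T1 T2). intros t Ht k Hk.
    destruct (Nat.eq_dec k p) as [->|Hne]; [apply H2; lia|apply H1; lia].
Qed.

Lemma vconv_shift p u b : vconv p u b -> vconv p (fun t => u (S t)) b.
Proof.
  intros H k Hk e He. destruct (H k Hk e He) as [T HT].
  exists T. intros t Ht. apply HT. lia.
Qed.

Lemma vconv_sub_scale p u u' a a' c :
  vconv p u a -> vconv p u' a' ->
  vconv p (fun t => vsub (u t) (vscale c (u' t))) (vsub a (vscale c a')).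
Proof.
  intros H H' k Hk. unfold vsub, vscale.
  apply CV_minus; [apply H; exact Hk|].
  apply (CV_mult (fun _ => c) (fun t => u' t k)); [|apply H'; exact Hk].
  intros e He. exists 0%nat. intros t _. unfold R_dist. rewrite Rminus_diag, Rabs_R0. exact He.
Qed.

Lemma nncomb_frequent_limit p N z u b s :
  vconv p u b -> (forall T, exists t, (T <= t)%nat /\ nncomb p N z (u t) s) ->
  nncomb p N z b s.
Proof.
  intros Hu Hfreq. apply nncomb_closed. intros e He.
  destruct (vconv_eventually_close _ _ _ Hu e He) as [T HT].
  destruct (Hfreq T) as [t [Ht Hin]].
  exists (u t), s. split; [exact Hin|split].
  - rewrite Rminus_diag, Rabs_R0. exact He.
  - exact (HT t Ht).
Qed.

Lemma not_cv0_frequently (a : nat -> R) :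
  (forall n, 0 <= a n) -> ~ Un_cv a 0 ->
  exists eps, 0 < eps /\ forall T, exists t, (T <= t)%nat /\ eps <= a t.
Proof.
  intros Ha Hn. apply not_all_ex_not in Hn. destruct Hn as [eps Hn].
  apply imply_to_and in Hn. destruct Hn as [He Hn].
  exists eps. split; [exact He|]. intros T.
  apply not_ex_all_not with (n := T) in Hn. apply not_all_ex_not in Hn.
  destruct Hn as [t Hn]. apply imply_to_and in Hn. destruct Hn as [Ht Hn].
  exists t. split; [lia|]. unfold R_dist in Hn. rewrite Rminus_0_r, Rabs_right in Hn.
  - lra.
  - apply Rle_ge, Ha.
Qed.

Lemma vertex_absorbs p (C : vec -> Prop) v a c :
  is_vertex p C v -> C a -> 0 < c < 1 ->
  C (vscale (/ (1 - c)) (vsub v (vscale c a))) -> veq p a v.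
Proof.
  intros [_ Hext] Ha Hc Hb. apply (Hext a _ c Ha Hb Hc).
  intros k Hk. unfold vadd, vscale, vsub. field. lra.
Qed.

Section Blurring_mean_shift.

Variables (p N : nat) (f : vec -> R) (w : nat -> R) (x : nat -> vec).
Hypothesis w_pos : forall j, (j < N)%nat -> 0 < w j.
Hypothesis f_range : forall u, 0 <= f u <= 1.
Hypothesis f_at_zero : forall u, veq p u vzero -> f u = 1.

Local Notation X := (bms N f w x).

Lemma bms_kernel_nonneg t k j : (j < N)%nat -> 0 <= f (vsub (X t k) (X t j)) * w j.
Proof. intros Hj. pose proof (f_range (vsub (X t k) (X t j))). pose proof (w_pos j Hj). nra. Qed.

(* The normalising sum of one mean-shift step is positive (the term j = k
   equals w k) and at most the total weight. *)
Lemma bms_kernel_sum_bounds t k : (k < N)%nat ->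
  0 < rsum N (fun j => f (vsub (X t k) (X t j)) * w j) <= rsum N w.
Proof.
  intros Hk. split.
  - apply Rlt_le_trans with (f (vsub (X t k) (X t k)) * w k).
    + rewrite f_at_zero by (intros m _; unfold vsub, vzero; ring).
      rewrite Rmult_1_l. exact (w_pos k Hk).
    + apply (rsum_ge_term N (fun j => f (vsub (X t k) (X t j)) * w j) k); [|exact Hk].
      intros; apply bms_kernel_nonneg; assumption.
  - apply rsum_le. intros j Hj.
    pose proof (f_range (vsub (X t k) (X t j))). pose proof (w_pos j Hj). nra.
Qed.

Lemma bms_step_comb t k : (k < N)%nat ->
  exists lam : nat -> R,
    (forall j, (j < N)%nat -> 0 <= lam j) /\ rsum N lam = 1 /\
    veq p (X (S t) k) (vsum N (fun j => vscale (lam j) (X t j))) /\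
    (forall j, (j < N)%nat -> f (vsub (X t k) (X t j)) * w j / rsum N w <= lam j).
Proof.
  intros Hk. destruct (bms_kernel_sum_bounds t k Hk) as [HD HDW].
  set (a := fun j => f (vsub (X t k) (X t j)) * w j) in *.
  set (D := rsum N a) in *.
  exists (fun j => a j / D). split; [|split; [|split]].
  - intros j Hj. unfold Rdiv. apply Rmult_le_pos; [apply bms_kernel_nonneg; exact Hj|].
    left. apply Rinv_0_lt_compat. exact HD.
  - unfold Rdiv. rewrite rsum_scalr. fold D. field. lra.
  - change (X (S t) k) with (vscale (/ D) (vsum N (fun j => vscale (a j) (X t j)))).
    intros m Hm. unfold vscale at 1. rewrite !vsum_coord. unfold vscale.
    rewrite <- rsum_scal. apply rsum_ext. intros; unfold Rdiv; ring.
  - intros j Hj. unfold Rdiv. apply Rmult_le_compat_l; [apply bms_kernel_nonneg; exact Hj|].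
    apply Rinv_le_contravar; assumption.
Qed.

Lemma bms_step_in_hull t k : (k < N)%nat -> nncomb p N (X t) (X (S t) k) 1.
Proof.
  intros Hk. destruct (bms_step_comb t k Hk) as [lam [H1 [H2 [H3 _]]]].
  exists lam. auto.
Qed.

Lemma bms_hull_nested T t y s :
  (T <= t)%nat -> nncomb p N (X t) y s -> nncomb p N (X T) y s.
Proof.
  induction 1 as [|t Ht IH]; intros Hy; [exact Hy|].
  apply IH. apply (nncomb_trans p N N (X t) (X (S t))); [|exact Hy].
  exact (bms_step_in_hull t).
Qed.

Lemma bms_limit_in_C1 j vj :
  (j < N)%nat -> vconv p (fun t => X t j) vj -> bms_C1 p N f w x vj.
Proof.
  intros Hj Hconv T. apply (nncomb_frequent_limit p N (X T) (fun t => X (S t) j)).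
  - exact (vconv_shift _ _ _ Hconv).
  - intros T'. exists (Nat.max T T'). split; [lia|].
    apply (bms_hull_nested T (Nat.max T T')); [lia|]. apply bms_step_in_hull. exact Hj.
Qed.

Lemma bms_peel_limit i j v vj eps :
  (i < N)%nat -> (j < N)%nat -> 0 < eps ->
  vconv p (fun t => X t i) v -> vconv p (fun t => X t j) vj ->
  (forall T, exists t, (T <= t)%nat /\ eps <= f (vsub (X t i) (X t j))) ->
  exists c, 0 < c < 1 /\ bms_C1 p N f w x (vscale (/ (1 - c)) (vsub v (vscale c vj))).
Proof.
  intros Hi Hj Heps Hvi Hvj Hfreq.
  set (W := rsum N w).
  assert (HwW : w j <= W) by (apply rsum_ge_term; [intros; left; auto|exact Hj]).
  pose proof (w_pos j Hj) as Hwj.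
  assert (Heps1 : eps <= 1).
  { destruct (Hfreq 0%nat) as [t [_ Ht]]. pose proof (f_range (vsub (X t i) (X t j))). lra. }
  set (c := eps * w j / (2 * W)).
  assert (Hc : 0 < c <= 1 / 2).
  { unfold c. split; [apply Rdiv_lt_0_compat; nra|].
    apply Rmult_le_reg_r with (2 * W); [lra|]. unfold Rdiv.
    rewrite Rmult_assoc, Rinv_l by lra. nra. }
  assert (Hpeel : forall t, eps <= f (vsub (X t i) (X t j)) ->
      nncomb p N (X t) (vsub (X (S t) i) (vscale c (X t j))) (1 - c)).
  { intros t Ht. destruct (bms_step_comb t i Hi) as [lam [H1 [H2 [H3 Hlow]]]].
    apply (nncomb_remove p N _ _ 1 lam j c H1 H2 H3 Hj).
    eapply Rle_trans; [|apply (Hlow j Hj)]. fold W. unfold c, Rdiv.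
    rewrite Rinv_mult, <- !Rmult_assoc.
    apply Rmult_le_compat_r; [left; apply Rinv_0_lt_compat; lra|].
    pose proof (Rinv_0_lt_compat 2 ltac:(lra)). pose proof (f_range (vsub (X t i) (X t j))).
    assert (/ 2 <= 1) by lra. nra. }
  exists c. split; [lra|]. intros T.
  apply (nncomb_scale p N (X T) _ (1 - c)); [left; apply Rinv_0_lt_compat; lra|field; lra|].
  apply (nncomb_frequent_limit p N (X T)
           (fun t => vsub (X (S t) i) (vscale c (X t j)))).
  - exact (vconv_sub_scale _ _ _ _ _ c (vconv_shift _ _ _ Hvi) Hvj).
  - intros T'. destruct (Hfreq (Nat.max T T')) as [t [Ht Hft]].
    exists t. split; [lia|]. apply (bms_hull_nested T t); [lia|]. exact (Hpeel t Hft).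
Qed.

End Blurring_mean_shift.

Theorem lemma3 (p N : nat) (x : nat -> vec) (w : nat -> R) (f : vec -> R)
  (hw : forall j, (j < N)%nat -> 0 < w j)
  (hf : PDD p f)
  (i : nat) (hi : (i < N)%nat) (v : vec)
  (hv : is_vertex p (bms_C1 p N f w x) v)
  (hconv : vconv p (fun t => bms N f w x t i) v) :
  forall j, (j < N)%nat ->
    (exists vj : vec, vconv p (fun t => bms N f w x t j) vj /\ ~ veq p vj v) ->
    Un_cv (fun t => f (vsub (bms N f w x t i) (bms N f w x t j))) 0.
Proof.
  intros j hj [vj [hvj hne]].
  destruct hf as [f_range [f_one _]].
  assert (f_at_zero : forall u, veq p u vzero -> f u = 1) by (intros u; apply f_one).
  apply NNPP. intros Hnot.
  destruct (not_cv0_frequently _ (fun t => proj1 (f_range _)) Hnot) as [eps [Heps Hfreq]].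
  destruct (bms_peel_limit p N f w x hw f_range f_at_zero i j v vj eps hi hj Heps
              hconv hvj Hfreq) as [c [Hc Hb]].
  apply hne, (vertex_absorbs p _ v vj c hv); [|exact Hc|exact Hb].
  exact (bms_limit_in_C1 p N f w x hw f_range f_at_zero j vj hj hvj).
Qed.
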